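(* For every integer $n\ge 0$, \[ \sum_{k=0}^{n}\Big(-\frac{1}{4}\Big)^k\binom{n}{k}\binom{2k}{k}\,k\,H_{2k} =\frac{n}{(1-2n)2^{1+2n}}\binom{2n}{n}\Big\{3H_n-4H_{2n}-\frac{2+4n}{1-2n}\Big\}. \]
   Context: For an integer $m\ge 0$, $H_m$ denotes the $m$-th harmonic number: $H_0=0$ and $H_m=\sum_{j=1}^m \frac1j$ for $m\ge1$. $\binom{n}{k}$ is the usual binomial coefficient. *)

From HB Require Import structures.
From mathcomp Require Import all_boot all_order all_algebra.
Set Implicit Arguments. Unset Strict Implicit. Unset Printing Implicit Defensive.
Import Order.TTheory GRing.Theory Num.Theory.
Local Open Scope ring_scope.

Definition harmonic (m : nat) : rat := \sum_(1 <= j < m.+1) (j%:R)^-1.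

(* Creative telescoping (Zeilberger's algorithm) in n.  With the weight
   c_k = (-1/4)^k C(2k,k), put A_n = sum_k C(n,k) c_k and
   S_n = sum_k C(n,k) c_k k H_{2k}.  Explicit certificates G(n,k), vanishing at
   k = 0 and k = n+2, make the summands of the recurrences
     (2n+2) A_{n+1} = (2n+1) A_n,
     4n S_{n+1} + 2(1-2n) S_n = n(2n+5) / ((n+1)(2n-1)) A_n
   telescope.  The first gives A_n = C(2n,n)/4^n, and then the closed form for
   S_n follows by induction from n = 1. *)

From HB Require Import structures.
From mathcomp Require Import all_boot all_order all_algebra.
From mathcomp Require Import ring lra zify.
Import Order.TTheory GRing.Theory Num.Theory.
Local Open Scope ring_scope.

Lemma harmonicS m : harmonic m.+1 = harmonic m + (m%:R + 1)^-1.
Proof. by rewrite /harmonic big_nat_recr //= natr1. Qed.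

Lemma harmonic_doubleS k :
  harmonic (2 * k.+1) = harmonic (2 * k) + (2 * k%:R + 1)^-1 + (2 * k%:R + 2)^-1.
Proof.
have -> : (2 * k.+1 = (2 * k).+2)%N by lia.
by rewrite !harmonicS -natr1 natrM addrA.
Qed.

Lemma natr1_neq0 {R : numDomainType} (m : nat) : (m%:R + 1 : R) != 0.
Proof. by rewrite natr1 pnatr_eq0. Qed.

Lemma binS_ratio {R : numFieldType} n j :
  ('C(n, j.+1))%:R = (n%:R - j%:R) * ('C(n, j))%:R / (j%:R + 1) :> R.
Proof.
have [le_jn | lt_nj] := leqP j n.
  have := congr1 (fun x => x%:R : R) (mul_bin_left n j).
  rewrite /= !natrM natrB // natr1 => <-.
  by field; rewrite addrC natr1_neq0.
by rewrite (bin_small lt_nj) bin_small ?mulr0 ?mul0r // ltnW.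
Qed.

Lemma bin_centralS k : (k.+1 * 'C(2 * k.+1, k.+1) = 2 * (2 * k).+1 * 'C(2 * k, k))%N.
Proof.
have -> : (2 * k.+1 = (2 * k).+2)%N by lia.
have sym : 'C((2 * k).+1, k) = 'C((2 * k).+1, k.+1).
  by rewrite -(@bin_sub (2 * k).+1 k); [congr 'C(_, _); lia | lia].
by rewrite binS -sym -mulnA (mul_bin_diag (2 * k).+1 k); lia.
Qed.

Lemma bin_centralS_ratio {R : numFieldType} k :
  ('C(2 * k.+1, k.+1))%:R = 2 * (2 * k%:R + 1) * ('C(2 * k, k))%:R / (k%:R + 1) :> R.
Proof.
have := congr1 (fun x => x%:R : R) (bin_centralS k).
rewrite /= !natrM -natr1 -[((2 * k).+1)%:R]natr1 natrM => <-.
by field; rewrite natr1_neq0.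
Qed.

Definition central_weight (k : nat) : rat := (- (1 / 4)) ^+ k * ('C(2 * k, k))%:R.

Lemma central_weight0 : central_weight 0 = 1.
Proof. by rewrite /central_weight expr0 mul1r bin0. Qed.

Lemma central_weightS k :
  central_weight k.+1 = central_weight k * (- (2 * k%:R + 1) / (2 * (k%:R + 1))).
Proof.
rewrite /central_weight exprS bin_centralS_ratio.
by field; rewrite natr1_neq0.
Qed.

Definition binom_sum (w : nat -> rat) (n : nat) : rat :=
  \sum_(0 <= k < n.+1) ('C(n, k))%:R * w k.

Lemma binom_sum_ext (w : nat -> rat) n :
  binom_sum w n = \sum_(0 <= k < n.+2) ('C(n, k))%:R * w k.
Proof. by rewrite big_nat_recr //= bin_small // mul0r addr0. Qed.

Lemma sum_certificate (F G : nat -> rat) m :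
  G 0%N = 0 -> (forall k, F k = G k.+1 - G k) -> \sum_(0 <= k < m) F k = G m.
Proof.
by move=> G0 FG; rewrite (telescope_sumr_eq G) ?G0 ?subr0.
Qed.

Definition central_cert (n k : nat) : rat :=
  if k is j.+1 then ('C(n, j))%:R * central_weight k * (-2 * k%:R) else 0.

Lemma central_cert_step n k :
  (2 * n%:R + 2) * (('C(n.+1, k))%:R * central_weight k)
    - (2 * n%:R + 1) * (('C(n, k))%:R * central_weight k)
  = central_cert n k.+1 - central_cert n k.
Proof.
case: k => [|j].
  by rewrite /central_cert !bin0 central_weightS central_weight0; field.
rewrite /central_cert binS natrD (central_weightS j.+1) binS_ratio -!natr1.
have nz2 := natr1_neq0 (R := rat) j.+1; rewrite -natr1 in nz2.
by field; rewrite natr1_neq0 nz2.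
Qed.

Lemma binom_sum_central_rec n :
  (2 * n%:R + 2) * binom_sum central_weight n.+1
  = (2 * n%:R + 1) * binom_sum central_weight n.
Proof.
apply/eqP; rewrite -subr_eq0; apply/eqP.
rewrite (binom_sum_ext _ n) /binom_sum !mulr_sumr -sumrB.
rewrite (sum_certificate _ _ _ _ (central_cert_step n)) //.
by rewrite /central_cert bin_small // !mul0r.
Qed.

Lemma binom_sum_central n : binom_sum central_weight n = ('C(2 * n, n))%:R / 4 ^+ n.
Proof.
elim: n => [|n IH]; first by rewrite /binom_sum big_nat1 central_weight0 bin0 expr0 divr1.
have nz : (2 * n%:R + 2 : rat) != 0 by apply: lt0r_neq0; have := ler0n rat n; lra.
have -> : binom_sum central_weight n.+1
          = (2 * n%:R + 1) * binom_sum central_weight n / (2 * n%:R + 2).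
  by rewrite -binom_sum_central_rec; field.
rewrite IH bin_centralS_ratio exprS.
by field; rewrite nz natr1_neq0 expf_neq0.
Qed.

Definition harmonic_weight (k : nat) : rat :=
  central_weight k * k%:R * harmonic (2 * k).

Definition harmonic_rec_coef (n : nat) : rat :=
  n%:R * (2 * n%:R + 5) / ((n%:R + 1) * (2 * n%:R - 1)).

Definition harmonic_cert (n k : nat) : rat :=
  if k is j.+1 then
    let x := k%:R in
    ('C(n, j))%:R * central_weight k *
      (4 * x * (1 - x) * harmonic (2 * k)
       - 2 + 2 * (4 * n%:R ^+ 2 + 10 * n%:R + 3) / ((n%:R + 1) * (2 * n%:R - 1)) * x
       - 8 / (2 * n%:R - 1) * x ^+ 2)
  else 0.

Lemma natr_double_sub1_neq0 {R : realFieldType} n : (2 * n%:R - 1 : R) != 0.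
Proof.
case: n => [|m]; first by rewrite mulr0 sub0r oppr_eq0 oner_eq0.
by apply: lt0r_neq0; rewrite -natr1; have := ler0n R m; lra.
Qed.

Lemma harmonic_cert_step n k :
  4 * n%:R * (('C(n.+1, k))%:R * harmonic_weight k)
    + 2 * (1 - 2 * n%:R) * (('C(n, k))%:R * harmonic_weight k)
    - harmonic_rec_coef n * (('C(n, k))%:R * central_weight k)
  = harmonic_cert n k.+1 - harmonic_cert n k.
Proof.
have nz1 := natr_double_sub1_neq0 (R := rat) n; have nz2 := natr1_neq0 (R := rat) n.
rewrite /harmonic_weight /harmonic_rec_coef /harmonic_cert.
case: k => [|j].
  by rewrite !bin0 central_weightS central_weight0 !mulr0 !mul0r; field; rewrite nz1 nz2.
rewrite binS natrD (central_weightS j.+1) (harmonic_doubleS j.+1) binS_ratio -!natr1.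
have nz3 := natr1_neq0 (R := rat) j.+1; rewrite -natr1 in nz3.
have p1 : (2 * (j%:R + 1) + 2 : rat) != 0 by apply: lt0r_neq0; have := ler0n rat j; lra.
have p2 : (2 * (j%:R + 1) + 1 : rat) != 0 by apply: lt0r_neq0; have := ler0n rat j; lra.
by field; rewrite nz1 nz2 p1 p2 natr1_neq0 nz3.
Qed.

Lemma binom_sum_harmonic_rec n :
  4 * n%:R * binom_sum harmonic_weight n.+1
    + 2 * (1 - 2 * n%:R) * binom_sum harmonic_weight n
  = harmonic_rec_coef n * binom_sum central_weight n.
Proof.
apply/eqP; rewrite -subr_eq0; apply/eqP.
rewrite !(binom_sum_ext _ n) /binom_sum !mulr_sumr -big_split -sumrB.
rewrite (sum_certificate _ _ _ _ (harmonic_cert_step n)) //.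
by rewrite /harmonic_cert bin_small // !mul0r.
Qed.

Definition harmonic_closed (n : nat) : rat :=
  n%:R / ((1 - 2 * n%:R) * 2 ^+ (1 + 2 * n)) * ('C(2 * n, n))%:R *
    (3 * harmonic n - 4 * harmonic (2 * n) - (2 + 4 * n%:R) / (1 - 2 * n%:R)).

Lemma harmonic_closedS m : (0 < m)%N ->
  harmonic_closed m.+1
  = (harmonic_rec_coef m * (('C(2 * m, m))%:R / 4 ^+ m)
     - 2 * (1 - 2 * m%:R) * harmonic_closed m) / (4 * m%:R).
Proof.
move=> m_gt0; have hm : (m%:R : rat) != 0 by rewrite pnatr_eq0 -lt0n.
rewrite /harmonic_closed /harmonic_rec_coef bin_centralS_ratio harmonic_doubleS.
rewrite harmonicS -natr1.
have -> : (2 : rat) ^+ (1 + 2 * m.+1) = 2 * 4 ^+ m * 4.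
  by rewrite exprD expr1 exprM exprS mulrCA mulrC.
have -> : (2 : rat) ^+ (1 + 2 * m) = 2 * 4 ^+ m by rewrite exprD expr1 exprM.
have h1 := natr_double_sub1_neq0 (R := rat) m.
have h2 : (1 - 2 * m%:R : rat) != 0 by rewrite -oppr_eq0 opprB.
have h3 : (1 - 2 * (m%:R + 1) : rat) != 0 by apply: ltr0_neq0; have := ler0n rat m; lra.
have h4 : (2 * m%:R + 2 : rat) != 0 by apply: lt0r_neq0; have := ler0n rat m; lra.
have h5 : (2 * m%:R + 1 : rat) != 0 by apply: lt0r_neq0; have := ler0n rat m; lra.
by field; rewrite h1 h2 h3 h4 h5 natr1_neq0 hm expf_neq0.
Qed.

Lemma binom_sum_harmonic n : binom_sum harmonic_weight n = harmonic_closed n.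
Proof.
elim: n => [|[|m] IH].
- by rewrite /binom_sum big_nat1 /harmonic_weight /harmonic_closed !mulr0 !mul0r.
- rewrite /binom_sum /harmonic_closed big_nat_recr //= big_nat1 /harmonic_weight.
  by rewrite /central_weight /= (harmonicS 1) (harmonicS 0) /harmonic big_geq.
- rewrite harmonic_closedS // -IH -binom_sum_central -binom_sum_harmonic_rec.
  by rewrite addrK mulrC mulKf // mulf_neq0 ?pnatr_eq0.
Qed.

Theorem theorem8 (n : nat) :
  \sum_(0 <= k < n.+1)
     (- (1 / 4 : rat)) ^+ k * ('C(n, k))%:R * ('C(2 * k, k))%:R * k%:R * harmonic (2 * k)
  = n%:R / ((1 - 2 * n%:R) * 2 ^+ (1 + 2 * n)) * ('C(2 * n, n))%:R *
    (3 * harmonic n - 4 * harmonic (2 * n) - (2 + 4 * n%:R) / (1 - 2 * n%:R)).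
Proof.
rewrite -/(harmonic_closed n) -binom_sum_harmonic.
by apply: eq_bigr => k _; rewrite /harmonic_weight /central_weight; ring.
Qed.
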